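(* Let $\mathbb{X}\subseteq\mathbb{P}^2$ be a $\Bbbk$-configuration of type $(d_1,\dots,d_s)$ with $s\ge2$. Then there exist subsets $\mathbb{X}_1,\dots,\mathbb{X}_s$ and lines $\mathbb{L}_1,\dots,\mathbb{L}_s$ defining $\mathbb{X}$ as a $\Bbbk$-configuration of type $(d_1,\dots,d_s)$, and an integer $r$ with $1\le r\le s$, such that $|\mathbb{L}_{s-j}\cap\mathbb{X}|=d_s$ for all $0\le j\le r-1$ and $|\mathbb{L}_{s-j}\cap\mathbb{X}|<d_s$ for all $r\le j\le s-1$.
   Context: $\Bbbk$ is an algebraically closed field. A $\Bbbk$-configuration of type $(d_1,\dots,d_s)$ is a finite set $\mathbb{X}\subseteq\mathbb{P}^2$ for which there exist integers $1\le d_1<\cdots<d_s$, subsets $\mathbb{X}_1,\dots,\mathbb{X}_s$ of $\mathbb{X}$ and distinct lines $\mathbb{L}_1,\dots,\mathbb{L}_s\subseteq\mathbb{P}^2$ such that (1) $\mathbb{X}=\bigcup_{i=1}^s\mathbb{X}_i$; (2) $|\mathbb{X}_i|=d_i$ and $\mathbb{X}_i\subseteq\mathbb{L}_i$ for each $i$; (3) for $1<i\le s$, $\mathbb{L}_i$ contains no point of $\mathbb{X}_j$ for any $j<i$. We say $\mathbb{X}$ is defined by these subsets and lines; such defining data need not be unique. *)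

From HB Require Import structures.
From mathcomp Require Import all_boot all_order all_algebra.
Set Implicit Arguments. Unset Strict Implicit. Unset Printing Implicit Defensive.
Import GRing.Theory.
Local Open Scope ring_scope.

(* Points (and, dually, lines) of P^2 over a field K are represented by their
   unique normalized homogeneous coordinates (x, y, z): the first nonzero
   coordinate equals 1.  Every point of P^2 has exactly one such representative,
   so Leibniz equality of [ppoint K] is equality of projective points. *)
Definition normalized (K : fieldType) (p : K * K * K) : bool :=
  let: (x, y, z) := p in
  [|| x == 1, (x == 0) && (y == 1) | [&& x == 0, y == 0 & z == 1]].

Record ppoint (K : fieldType) := PPoint {
  pcoords :> K * K * K;
  _ : normalized pcoords }.

HB.instance Definition _ (K : fieldType) := [isSub for @pcoords K].
HB.instance Definition _ (K : fieldType) := [Equality of ppoint K by <:].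

(* A line is given by its (normalized) dual coordinates (a, b, c), i.e. it is
   the line a X + b Y + c Z = 0. *)
Definition pline (K : fieldType) := ppoint K.

Definition on_line (K : fieldType) (L : pline K) (P : ppoint K) : bool :=
  let: (a, b, c) := pcoords L in
  let: (x, y, z) := pcoords P in
  a * x + b * y + c * z == 0.

Definition config_type (s : nat) (d : nat -> nat) : Prop :=
  (1 <= s)%N /\ (1 <= d 1)%N /\ (forall i, (1 <= i)%N -> (i < s)%N -> (d i < d i.+1)%N).

(* X (a finite set, given as a duplicate-free list) is defined as a
   k-configuration of type d by the subsets Xs 1, ..., Xs s and lines
   Ls 1, ..., Ls s. *)
Definition defines_config (K : fieldType) (X : seq (ppoint K)) (s : nat)
    (d : nat -> nat) (Xs : nat -> seq (ppoint K)) (Ls : nat -> pline K) : Prop :=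
  [/\ config_type s d,
      (forall P, P \in X <-> exists2 i, (1 <= i <= s)%N & P \in Xs i),
      (forall i, (1 <= i <= s)%N ->
         [/\ uniq (Xs i), size (Xs i) = d i & all (on_line (Ls i)) (Xs i)]),
      (forall i j, (1 <= i <= s)%N -> (1 <= j <= s)%N -> i != j -> Ls i != Ls j) &
      (forall i j, (1 <= j)%N -> (j < i)%N -> (i <= s)%N ->
         ~~ has (on_line (Ls i)) (Xs j))].

Definition is_kconfig (K : fieldType) (X : seq (ppoint K)) (s : nat) (d : nat -> nat) : Prop :=
  uniq X /\ exists Xs Ls, defines_config X s d Xs Ls.

Definition card_on_line (K : fieldType) (L : pline K) (X : seq (ppoint K)) : nat :=
  size (filter (on_line L) X).

From HB Require Import structures.
From mathcomp Require Import all_boot all_order all_algebra.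
From mathcomp Require Import ring zify.
Set Implicit Arguments. Unset Strict Implicit. Unset Printing Implicit Defensive.
Import GRing.Theory.

(* Two distinct lines meet in at most one point, so for j > i the block X_j
   contributes at most one point to L_i, while the blocks X_j with j < i miss
   L_i; hence |L_i ∩ X| <= d_i + (s - i) <= d_s.  If L_i (i < s) attains d_s,
   all these inequalities are equalities: d_{i+1} = d_i + 1 and L_i passes
   through a point P of X_{i+1}.  Moving P from X_{i+1} to X_i and exchanging
   L_i with L_{i+1} gives new defining data, and these adjacent exchanges
   bubble-sort the lines meeting X in d_s points to the end. *)

Section Incidence.
Variable K : fieldType.
Local Open Scope ring_scope.

Definition dot (u v : K * K * K) : K :=
  let: (u1, u2, u3) := u in let: (v1, v2, v3) := v in u1 * v1 + u2 * v2 + u3 * v3.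

Definition cross (u v : K * K * K) : K * K * K :=
  let: (u1, u2, u3) := u in let: (v1, v2, v3) := v in
  (u2 * v3 - u3 * v2, u3 * v1 - u1 * v3, u1 * v2 - u2 * v1).

(* The representative of the projective point [n] of a nonzero vector [n];
   [normalize 0 = (0, 0, 1)] is a junk value. *)
Definition normalize (n : K * K * K) : K * K * K :=
  let: (n1, n2, n3) := n in
  if n1 != 0 then (1, n2 / n1, n3 / n1)
  else if n2 != 0 then (0, 1, n3 / n2) else (0, 0, 1).

Lemma on_lineE (L P : ppoint K) : on_line L P = (dot L P == 0).
Proof. by case: L P => [[[a b] c] ?] [[[x y] z] ?]. Qed.

Lemma cross_self (u : K * K * K) : cross u u = 0.
Proof. by case: u => [[u1 u2] u3]; congr (_, _, _); ring. Qed.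

(* The vector triple product [a x (p x q) = (a.q) p - (a.p) q]. *)
Lemma cross_cross_dot0 (a p q : K * K * K) :
  dot a p = 0 -> dot a q = 0 -> cross a (cross p q) = 0.
Proof.
case: a p q => [[a1 a2] a3] [[p1 p2] p3] [[q1 q2] q3] ap aq.
have E x y : dot (a1, a2, a3) (q1, q2, q3) * x - dot (a1, a2, a3) (p1, p2, p3) * y = 0.
  by rewrite ap aq !mul0r subrr.
rewrite /cross; congr (_, _, _);
  [rewrite -(E p1 q1) | rewrite -(E p2 q2) | rewrite -(E p3 q3)]; rewrite /=; ring.
Qed.

Lemma normalized_neq0 (u : K * K * K) : normalized u -> u != 0.
Proof.
case: u => [[x y] z] /or3P[/eqP->|/andP[_ /eqP->]|/and3P[_ _ /eqP->]];
  apply/negP => /eqP[]; [move=> /eqP | move=> _ /eqP | move=> _ _ /eqP];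
  by rewrite oner_eq0.
Qed.

Lemma normalized_cross0 (u n : K * K * K) :
  normalized u -> n != 0 -> cross u n = 0 -> u = normalize n.
Proof.
case: u n => [[x y] z] [[n1 n2] n3].
move=> /or3P[/eqP->|/andP[/eqP-> /eqP->]|/and3P[/eqP-> /eqP-> /eqP->]] nz [/eqP c1 /eqP c2 /eqP c3];
  rewrite ?mul1r ?mul0r ?sub0r ?subr0 ?oppr_eq0 ?subr_eq0 in c1 c2 c3 *;
  move: c1 c2 c3 => /eqP c1 /eqP c2 /eqP c3.
- have n10 : n1 != 0 by apply: contra nz => /eqP n10; rewrite -c2 c3 n10 !mulr0.
  by rewrite /= n10 -c2 c3 !mulfK.
- have n20 : n2 != 0 by apply: contra nz => /eqP n20; rewrite c1 c3 n20 mulr0.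
  by rewrite /= c3 eqxx n20 c1 mulfK.
- by move: nz; rewrite /= c1 c2 eqxx; case: eqP => // ->.
Qed.

Lemma ppoint_eq_cross0 (P Q : ppoint K) : cross P Q = 0 -> P = Q.
Proof.
move=> PQ; have nQ := normalized_neq0 (valP Q).
apply: val_inj; rewrite /= (normalized_cross0 (valP P) nQ PQ).
by rewrite -(normalized_cross0 (valP Q) nQ (cross_self Q)).
Qed.

Lemma lines_meet_once (L L' P Q : ppoint K) : L != L' ->
  on_line L P -> on_line L Q -> on_line L' P -> on_line L' Q -> P = Q.
Proof.
rewrite !on_lineE => LL' /eqP LP /eqP LQ /eqP L'P /eqP L'Q.
have [/ppoint_eq_cross0 //|nPQ] := eqVneq (cross P Q) 0.
case/eqP: LL'; apply: val_inj.
rewrite /= (normalized_cross0 (valP L) nPQ (cross_cross_dot0 LP LQ)).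
by rewrite (normalized_cross0 (valP L') nPQ (cross_cross_dot0 L'P L'Q)).
Qed.
End Incidence.

Lemma leq_add_incr (d : nat -> nat) (s a b : nat) :
  (forall i, 1 <= i -> i < s -> d i < d i.+1) ->
  1 <= a -> a <= b -> b <= s -> d a + (b - a) <= d b.
Proof.
move=> incr a1; elim: b => [|b IHb]; first lia.
rewrite leq_eqVlt => /orP[/eqP<- _|ab bs]; first by rewrite subnn addn0.
by have := IHb ab (ltnW bs); have := incr b (leq_trans a1 ab) bs; lia.
Qed.

Definition adj_swap (i k : nat) : nat :=
  if k == i then i.+1 else if k == i.+1 then i else k.

Lemma adj_swap_l i : adj_swap i i = i.+1.
Proof. by rewrite /adj_swap eqxx. Qed.

Lemma adj_swap_r i : adj_swap i i.+1 = i.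
Proof. by rewrite /adj_swap eqxx gtn_eqF. Qed.

Lemma adj_swap_id i k : k != i -> k != i.+1 -> adj_swap i k = k.
Proof. by rewrite /adj_swap => /negbTE-> /negbTE->. Qed.

Lemma adj_swapK i : involutive (adj_swap i).
Proof.
move=> k; have [->|ki] := eqVneq k i; first by rewrite adj_swap_l adj_swap_r.
have [->|ki1] := eqVneq k i.+1; first by rewrite adj_swap_r adj_swap_l.
by rewrite !adj_swap_id.
Qed.

Lemma adj_swap_range i n k : 1 <= i -> i < n -> 1 <= k <= n -> 1 <= adj_swap i k <= n.
Proof. by rewrite /adj_swap; case: eqVneq => _; [|case: eqVneq => _]; lia. Qed.

Section BubbleSort.
Variables (T : Type) (s : nat) (good : T -> bool) (admissible : (nat -> T) -> Prop).
Hypothesis admissible_swap : forall f i, admissible f -> 1 <= i -> i < s ->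
  good (f i) -> ~~ good (f i.+1) -> admissible (f \o adj_swap i).

Definition inversion_weight (f : nat -> T) : nat :=
  \sum_(k <- iota 1 s) good (f k) * (s - k).

Lemma inversion_weight_swap f i : 1 <= i -> i < s -> good (f i) -> ~~ good (f i.+1) ->
  (inversion_weight (f \o adj_swap i)).+1 = inversion_weight f.
Proof.
move=> i1 iS gi ngi1; rewrite /inversion_weight.
have -> : iota 1 s = iota 1 i.-1 ++ [:: i, i.+1 & iota i.+2 (s - i.+1)].
  have e : s = i.-1 + 2 + (s - i.+1) by lia.
  have e1 : 1 + i.-1 = i by lia.
  have e2 : 1 + (i.-1 + 2) = i.+2 by lia.
  by rewrite [in LHS]e !iotaD -catA e1 e2.
rewrite !big_cat !big_cons /= adj_swap_l adj_swap_r gi (negbTE ngi1) /= !mul0n !mul1n.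
have fixed r : all (fun k => (k != i) && (k != i.+1)) r ->
    \sum_(k <- r) good (f (adj_swap i k)) * (s - k) = \sum_(k <- r) good (f k) * (s - k).
  by move=> /allP r_fixed; apply: eq_big_seq => k /r_fixed /andP[ki ki1]; rewrite adj_swap_id.
rewrite !fixed /=; first lia.
all: by apply/allP => k; rewrite mem_iota; lia.
Qed.

Lemma bubble_sort f : admissible f ->
  exists2 g, admissible g & forall i, 1 <= i -> i < s -> good (g i) -> good (g i.+1).
Proof.
suff: forall n f, inversion_weight f < n -> admissible f ->
    exists2 g, admissible g & forall i, 1 <= i -> i < s -> good (g i) -> good (g i.+1).
  by apply; apply: ltnSn.
elim=> [//|n IHn] {}f lt_fn adm_f.
have [/hasP[i]|/hasPn sorted] := boolP (has (fun i => good (f i) && ~~ good (f i.+1)) (iota 1 s.-1)).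
  rewrite mem_iota => ir /andP[gi ngi1].
  apply: (IHn (f \o adj_swap i)); last by apply: admissible_swap => //; lia.
  by rewrite -ltnS inversion_weight_swap //; lia.
exists f => // i i1 iS gi; apply: contraT => ngi1.
by have := sorted i; rewrite mem_iota gi ngi1 => /(_ ltac:(lia)).
Qed.

End BubbleSort.

Lemma suffix_threshold (b : nat -> bool) s : 1 <= s -> b s ->
  (forall i, 1 <= i -> i < s -> b i -> b i.+1) ->
  exists r, [/\ 1 <= r <= s, forall j, j <= r - 1 -> b (s - j)
              & forall j, r <= j <= s - 1 -> ~~ b (s - j)].
Proof.
move=> s1 bs up.
have ex_m : exists m, (1 <= m <= s) && b m by exists s; rewrite bs andbT; lia.
case: (ex_minnP ex_m) => m /andP[mr bm] m_min.
have up_m k : m <= k <= s -> b k.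
  elim: k => [|k IHk] kr; first lia.
  have [<- //|mk] := eqVneq m k.+1.
  by apply: up; [lia | lia | apply: IHk; lia].
exists (s - m).+1; split; first lia.
  by move=> j jr; apply: up_m; lia.
move=> j jr; apply/negP => bj.
by have := m_min (s - j); rewrite bj andbT => /(_ ltac:(lia)); lia.
Qed.

Section Configuration.
Variables (K : fieldType) (X : seq (ppoint K)) (s : nat) (d : nat -> nat).
Variables (Xs : nat -> seq (ppoint K)) (Ls : nat -> pline K).
Hypotheses (uniqX : uniq X) (D : defines_config X s d Xs Ls).

Lemma config_incr i : 1 <= i -> i < s -> d i < d i.+1.
Proof. by case: D => -[_ [_ incr]] _ _ _ _; apply: incr. Qed.

Lemma config_cover x : x \in X <-> exists2 k, 1 <= k <= s & x \in Xs k.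
Proof. by case: D => _ cover _ _ _. Qed.

Lemma config_block k : 1 <= k <= s ->
  [/\ uniq (Xs k), size (Xs k) = d k & all (on_line (Ls k)) (Xs k)].
Proof. by case: D => _ _ blocks _ _; apply: blocks. Qed.

Lemma config_lines_neq j k : 1 <= j <= s -> 1 <= k <= s -> j != k -> Ls j != Ls k.
Proof. by case: D => _ _ _ lines_neq _; apply: lines_neq. Qed.

Lemma config_avoid m k x :
  1 <= m -> m < k -> k <= s -> x \in Xs m -> ~~ on_line (Ls k) x.
Proof. by case: D => _ _ _ _ avoid m1 mk ks; apply: (hasPn (avoid k m m1 mk ks)). Qed.

Lemma config_meet_leq1 i j : 1 <= i -> i < j -> j <= s ->
  size (filter (on_line (Ls i)) (Xs j)) <= 1.
Proof.
move=> i1 ij js; have [uXj _ /allP onLj] := config_block (k := j) ltac:(lia).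
case E: (filter (on_line (Ls i)) (Xs j)) => [//|P t].
have: P \in filter (on_line (Ls i)) (Xs j) by rewrite E mem_head.
rewrite mem_filter => /andP[PLi PXj].
rewrite -E (@uniq_leq_size _ _ [:: P]) ?filter_uniq // => Q.
rewrite mem_filter mem_seq1 => /andP-[QLi QXj]; apply/eqP.
apply: (lines_meet_once _ QLi PLi (onLj Q QXj) (onLj P PXj)).
by apply: config_lines_neq; lia.
Qed.

Lemma card_on_line_leq i : 1 <= i <= s ->
  card_on_line (Ls i) X <=
  d i + \sum_(j <- iota i.+1 (s - i)) size (filter (on_line (Ls i)) (Xs j)).
Proof.
move=> ir; have [_ <- _] := config_block ir.
have -> : \sum_(j <- iota i.+1 (s - i)) size (filter (on_line (Ls i)) (Xs j)) =
    size (flatten [seq filter (on_line (Ls i)) (Xs j) | j <- iota i.+1 (s - i)]).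
  by rewrite size_flatten sumnE /shape !big_map.
rewrite /card_on_line -size_cat; apply: uniq_leq_size; first exact: filter_uniq.
move=> x; rewrite mem_filter mem_cat => /andP[xLi /config_cover[j jr xXj]].
case: (ltngtP j i) => [ji|ij|<-]; last by rewrite xXj.
  by move: xLi; apply: contraLR => _; apply: config_avoid xXj; lia.
apply/orP; right; apply/flattenP; exists (filter (on_line (Ls i)) (Xs j)).
  by apply/mapP; exists j; rewrite // mem_iota; lia.
by rewrite mem_filter xLi.
Qed.

Lemma sum_meet_leq i k : 1 <= i -> i < k ->
  \sum_(j <- iota k (s.+1 - k)) size (filter (on_line (Ls i)) (Xs j)) <= s.+1 - k.
Proof.
move=> i1 ik; rewrite -[leqRHS](size_iota k) -sum1_size !big_seq.
by apply: leq_sum => j; rewrite mem_iota => jr; apply: config_meet_leq1; lia.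
Qed.

Lemma card_on_line_leq_last i : 1 <= i <= s -> card_on_line (Ls i) X <= d s.
Proof.
move=> ir; have := card_on_line_leq ir; have /andP[i1 iS] := ir.
have := sum_meet_leq (k := i.+1) i1 (ltnSn i).
have := leq_add_incr config_incr i1 iS (leqnn s); rewrite subSS; lia.
Qed.

Lemma card_on_line_geq i : 1 <= i <= s -> d i <= card_on_line (Ls i) X.
Proof.
move=> ir; have [uXi <- /allP onLi] := config_block ir.
apply: uniq_leq_size => // x xXi; rewrite mem_filter onLi //=.
by apply/config_cover; exists i.
Qed.

Lemma full_line_next i : 1 <= i -> i < s -> card_on_line (Ls i) X = d s ->
  d i.+1 = (d i).+1 /\ has (on_line (Ls i)) (Xs i.+1).
Proof.
move=> i1 iS full; have := card_on_line_leq (i := i) ltac:(lia).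
have -> : s - i = (s - i.+1).+1 by lia.
rewrite /= big_cons full -size_filter_gt0.
have := sum_meet_leq (k := i.+2) i1 (leqnSn _).
have := leq_add_incr config_incr (ltn0Sn i) iS (leqnn s).
have := config_meet_leq1 i1 (ltnSn i) iS.
have := config_incr i1 iS; rewrite subSS; lia.
Qed.

Section Exchange.
Variables (i : nat) (P : ppoint K).
Hypotheses (i1 : 1 <= i) (iS : i < s) (PXi1 : P \in Xs i.+1) (PLi : on_line (Ls i) P).
Hypothesis dSi : d i.+1 = (d i).+1.

(* The blocks for the lines [Ls \o adj_swap i]: [P] joins the block on [Ls i]. *)
Definition exchange_blocks (k : nat) : seq (ppoint K) :=
  if k == i then rem P (Xs i.+1) else if k == i.+1 then P :: Xs i else Xs k.

Lemma exchange_cover x :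
  x \in X <-> exists2 k, 1 <= k <= s & x \in exchange_blocks k.
Proof.
have [uXi1 _ _] := config_block (k := i.+1) ltac:(lia).
have neq_Si : (i.+1 == i) = false by rewrite gtn_eqF.
rewrite config_cover /exchange_blocks; split=> -[j jr].
  case: (eqVneq j i) => [-> xXi|ji].
    by exists i.+1; rewrite ?neq_Si ?eqxx ?in_cons ?xXi ?orbT //; lia.
  case: (eqVneq j i.+1) => [-> xXi1|ji1 xXj]; last first.
    by exists j; rewrite ?(negbTE ji) ?(negbTE ji1).
  case: (eqVneq x P) => [->|xP].
    by exists i.+1; rewrite ?neq_Si ?eqxx ?mem_head //; lia.
  by exists i; rewrite ?eqxx ?(mem_rem_uniq _ uXi1) ?inE ?xP //; lia.
case: (eqVneq j i) => [_ /mem_rem xXi1|ji]; first by exists i.+1 => //; lia.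
case: (eqVneq j i.+1) => [_|ji1 xXj]; last by exists j.
by rewrite in_cons => /predU1P[->|xXi]; [exists i.+1 | exists i] => //; lia.
Qed.

Lemma exchange_block k : 1 <= k <= s ->
  [/\ uniq (exchange_blocks k), size (exchange_blocks k) = d k
     & all (on_line (Ls (adj_swap i k))) (exchange_blocks k)].
Proof.
move=> kr; have [uXi szXi onXi] := config_block (k := i) ltac:(lia).
have [uXi1 szXi1 onXi1] := config_block (k := i.+1) ltac:(lia).
rewrite /exchange_blocks /adj_swap; case: (eqVneq k i) => [->|ki].
  split; [exact: rem_uniq | by rewrite size_rem // szXi1 dSi | ].
  by apply/allP => x /mem_rem; apply/allP.
case: (eqVneq k i.+1) => [->|ki1]; last exact: config_block.
have PnXi : P \notin Xs i.
  by apply: contraL (allP onXi1 P PXi1); apply: config_avoid.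
by split; rewrite /= ?PnXi ?uXi ?szXi ?dSi ?PLi.
Qed.

Lemma exchange_lines_neq j k : 1 <= j <= s -> 1 <= k <= s -> j != k ->
  Ls (adj_swap i j) != Ls (adj_swap i k).
Proof.
move=> jr kr jk; apply: config_lines_neq; rewrite ?adj_swap_range //.
by rewrite (inj_eq (can_inj (adj_swapK i))).
Qed.

Lemma exchange_avoid j k x : 1 <= j -> j < k -> k <= s ->
  x \in exchange_blocks j -> ~~ on_line (Ls (adj_swap i k)) x.
Proof.
move=> j1 jk ks; have [uXi1 _ /allP onXi1] := config_block (k := i.+1) ltac:(lia).
rewrite /exchange_blocks /adj_swap.
case: (eqVneq j i) => [eji|ji].
  rewrite (mem_rem_uniq _ uXi1) inE => /andP[xP xXi1].
  case: (eqVneq k i) => [|_]; first lia.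
  case: (eqVneq k i.+1) => [_|ki1]; last by apply: (config_avoid (m := i.+1)); lia.
  move: xP; apply: contra => xLi; apply/eqP.
  by apply: (lines_meet_once (config_lines_neq (j := i) (k := i.+1) _ _ _));
    rewrite ?xLi ?PLi //; try lia; apply: onXi1.
case: (eqVneq j i.+1) => [eji1|ji1].
  case: (eqVneq k i) => [|_]; first lia.
  case: (eqVneq k i.+1) => [|_]; first lia.
  by rewrite in_cons => /predU1P[->|xXi];
    [apply: config_avoid PXi1 | apply: config_avoid xXi]; lia.
move=> xXj; case: (eqVneq k i) => [eki|_]; [|case: (eqVneq k i.+1) => [eki1|_]].
all: by apply: config_avoid xXj; lia.
Qed.

Lemma defines_config_exchange :
  defines_config X s d exchange_blocks (Ls \o adj_swap i).
Proof.
split; [by case: D | exact: exchange_cover | exact: exchange_block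
       | exact: exchange_lines_neq | ].
by move=> k j j1 jk ks; apply/hasPn => x; apply: exchange_avoid.
Qed.

End Exchange.

Lemma full_line_swap i : 1 <= i -> i < s -> card_on_line (Ls i) X = d s ->
  exists Xs', defines_config X s d Xs' (Ls \o adj_swap i).
Proof.
move=> i1 iS full; have [dSi /hasP[P PXi1 PLi]] := full_line_next i1 iS full.
by exists (exchange_blocks i P); apply: defines_config_exchange.
Qed.

End Configuration.

Theorem corollary2p11 (K : closedFieldType) (X : seq (ppoint K)) (s : nat)
    (d : nat -> nat) :
  (2 <= s)%N -> is_kconfig X s d ->
  exists (Xs : nat -> seq (ppoint K)) (Ls : nat -> pline K),
    defines_config X s d Xs Ls /\
    exists r : nat, [/\ (1 <= r <= s)%N,
      (forall j, (j <= r - 1)%N -> card_on_line (Ls (s - j)%N) X = d s) &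
      (forall j, (r <= j <= s - 1)%N -> (card_on_line (Ls (s - j)%N) X < d s)%N)].
Proof.
move=> s2 [uniqX [Xs [Ls D]]].
pose full (L : pline K) := card_on_line L X == d s.
have [Ls' [Xs' D'] sorted] :=
  @bubble_sort _ s full (fun Ls => exists Xs, defines_config X s d Xs Ls)
    (fun Ls i '(ex_intro Xs D) i1 iS fi _ => full_line_swap uniqX D i1 iS (eqP fi))
    Ls (ex_intro _ Xs D).
have full_s : full (Ls' s).
  by rewrite /full eqn_leq (card_on_line_leq_last uniqX D') ?(card_on_line_geq D') //; lia.
have [r [rr top rest]] := suffix_threshold (b := full \o Ls') (ltnW s2) full_s sorted.
exists Xs', Ls'; split => //; exists r; split => // j jr; first exact/eqP/top.
by rewrite ltn_neqAle rest // (card_on_line_leq_last uniqX D'); lia.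
Qed.
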